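(* Let $\mathcal N=\{N_1,\ldots,N_\ell\}$ ($\ell\ge4$) be a family of $k$-sets satisfying properties (i) and (ii) below, and fix any run of the decomposition process described in the context. Let $0\le j\le t$, $1\le i\le\ell_j$, and $Y\subseteq N_i$ with $|Y|\le j$. Then there exists a private pair $p\subseteq N_i\setminus Y$ for $N_i$ at time $j$ such that either $p$ is a subset of some $3$-element set $C\subseteq\bigl(N_i\cup\{a_i^{(0)},\dots,a_i^{(j)}\}\bigr)\setminus Y$ satisfying $C\cap(V\setminus N_r)\neq\varnothing$ for all $r=1,\dots,\ell$, or $p$ contains a vertex that is private for $N_i$ at time $j$.
   Context: Setting: $k\ge3$, $\mathcal N=\{N_1,\dots,N_\ell\}$ a family of $k$-subsets, $V=\bigcup N_i$, $n=|V|$, $m=n-k$, satisfying (i) $\bigcap_{i}N_i=\varnothing$ but $\bigcap_{j\ne i}N_j\ne\varnothing$ for all $i$; (ii) every $S\subseteq V$ with $|S|\ge k+1$ contains a $3$-set $T$ not contained in any $N_i$. Assume $\ell\ge4$. Decomposition process: Stage $0$: $\ell_0=\ell$; for each $i\le\ell_0$ choose $a_i^{(0)}\in\bigcap_{r\ne i}N_r$; kernel $A^{(0)}=\{a_1^{(0)},\dots,a_{\ell_0}^{(0)}\}$. Having defined stages $0,\dots,j$ (with surviving sets $N_1,\dots,N_{\ell_j}$, $\ell_j\ge4$, and kernels $A^{(0)},\dots,A^{(j)}$), consider $R^{(j)}=\{N_r\setminus\bigcup_{s\le j}A^{(s)} : r\le\ell_j\}$, which has empty intersection. If every subfamily of $R^{(j)}$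 minimal with respect to having empty intersection has only $2$ or $3$ members, stop and set $t=j$. Otherwise choose such a minimal subfamily with at least $4$ members; after reindexing assume it consists of the truncations $N_r^{(j+1)}=N_r\setminus\bigcup_{s\le j}A^{(s)}$, $r\le\ell_{j+1}$; choose $a_i^{(j+1)}\in\bigcap_{r\le\ell_{j+1},r\ne i}N_r^{(j+1)}$ for $i\le\ell_{j+1}$, and let $A^{(j+1)}$ be the set of these. Privacy: for $i\le\ell_j$, a vertex $v\in N_i$ is private for $N_i$ at time $j$ if no $N_r$ with $r\le\ell_j$, $r\ne i$, contains $v$; a $2$-set $p\subseteq N_i$ is a private pair for $N_i$ at time $j$ if no $N_r$ with $r\le\ell_j$, $r\neq i$, contains $p$. *)

From mathcomp Require Import all_boot.
Set Implicit Arguments. Unset Strict Implicit. Unset Printing Implicit Defensive.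

Section Defs.
Variables (T : finType) (l : nat) (N : 'I_l -> {set T}).

Definition Vset : {set T} := \bigcup_(i < l) N i.

Definition prop_i : Prop :=
  \bigcap_(i < l) N i = set0 /\
  forall i : 'I_l, \bigcap_(r < l | r != i) N r != set0.

Definition prop_ii (k : nat) : Prop :=
  forall S : {set T}, S \subset Vset -> k.+1 <= #|S| ->
    exists T3 : {set T}, [/\ T3 \subset S, #|T3| = 3 &
      forall i : 'I_l, ~~ (T3 \subset N i)].

(* Instead of reindexing, the surviving
   sets at stage j are described by the set [Sv j] of their ORIGINAL indices
   (so ell_j = #|Sv j|), and [a j i] is the kernel vertex a_i^{(j)} for
   i \in Sv j. *)
Definition kernel (Sv : nat -> {set 'I_l}) (a : nat -> 'I_l -> T) (s : nat)
  : {set T} := [set a s i | i in Sv s].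

Definition trunc (Sv : nat -> {set 'I_l}) (a : nat -> 'I_l -> T) (j : nat)
  (r : 'I_l) : {set T} := N r :\: \bigcup_(0 <= s < j) kernel Sv a s.

Definition minimal_empty (R : 'I_l -> {set T}) (Sj F : {set 'I_l}) : Prop :=
  [/\ F \subset Sj, \bigcap_(r in F) R r = set0 &
      forall F' : {set 'I_l}, F' \proper F -> \bigcap_(r in F') R r != set0].

Definition decomposition_run (t : nat) (Sv : nat -> {set 'I_l})
  (a : nat -> 'I_l -> T) : Prop :=
  [/\ Sv 0 = [set: 'I_l],
      (forall j, j <= t -> forall i, i \in Sv j ->
         forall r, r \in Sv j -> r != i -> a j i \in trunc Sv a j r),
      (* continuation: for j < t, stage j+1 keeps a minimal subfamily of
         R^(j) = truncations at stage j+1, with at least 4 members *)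
      (forall j, j < t ->
         minimal_empty (trunc Sv a j.+1) (Sv j) (Sv j.+1) /\ 4 <= #|Sv j.+1|) &
      (forall F, minimal_empty (trunc Sv a t.+1) (Sv t) F ->
         #|F| = 2 \/ #|F| = 3)].

Definition private_vertex (Sv : nat -> {set 'I_l}) (j : nat) (i : 'I_l)
  (v : T) : Prop :=
  v \in N i /\ forall r, r \in Sv j -> r != i -> v \notin N r.

Definition private_pair (Sv : nat -> {set 'I_l}) (j : nat) (i : 'I_l)
  (p : {set T}) : Prop :=
  [/\ #|p| = 2, p \subset N i &
      forall r, r \in Sv j -> r != i -> ~~ (p \subset N r)].

End Defs.

From mathcomp Require Import all_boot zify.

Set Implicit Arguments.
Unset Strict Implicit.
Unset Printing Implicit Defensive.

(* The kernel vertices A_i = {a_i^(0), ..., a_i^(j)} are pairwise distinct,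
   lie outside N_i and inside every other surviving set.  Hence
   S = (N_i u A_i) \ Y has at least (k - j) + (j + 1) elements, and property
   (ii) gives a 3-set C in S contained in no N_r.  C can leave a surviving N_r
   (r <> i) only through D = C n (N_i \ Y), and D <> C as C is not inside N_i.
   If |D| = 2, D is the private pair; if |D| = 1, its vertex is private and any
   second vertex of N_i \ Y completes the pair, one existing since
   |N_i| >= j + 2. *)

Lemma exists_neq (I : finType) (A : {set I}) (x : I) :
  1 < #|A| -> exists2 y, y \in A & y != x.
Proof.
case/card_gt1P=> [y [z [yA zA yz]]].
by case: (eqVneq y x) => [eyx|]; [exists z; rewrite // -eyx eq_sym | exists y].
Qed.

Lemma private_pair_with_private_vertex (T : finType) (l : nat)
  (N : 'I_l -> {set T}) (Sv : nat -> {set 'I_l}) j i v w :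
  private_vertex N Sv j i v -> w \in N i -> w != v ->
  private_pair N Sv j i [set v; w].
Proof.
move=> [vN v_priv] wN wv; split.
- by rewrite cards2 eq_sym wv.
- by rewrite subUset !sub1set vN wN.
- move=> r rS ri; apply/subsetPn; exists v; first exact: set21.
  exact: v_priv.
Qed.

Section DecompositionRun.

Variables (T : finType) (l : nat) (N : 'I_l -> {set T}).
Variables (t : nat) (Sv : nat -> {set 'I_l}) (a : nat -> 'I_l -> T).
Hypothesis four_le_l : 4 <= l.
Hypothesis bigcap_N : \bigcap_(i < l) N i = set0.
Hypothesis run : decomposition_run N t Sv a.

Lemma survivors0 : Sv 0 = [set: 'I_l].
Proof. by case: run. Qed.

Lemma kernel_in_trunc s x r :
  s <= t -> x \in Sv s -> r \in Sv s -> r != x -> a s x \in trunc N Sv a s r.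
Proof. by move=> le_st xS rS rx; case: run => _ ker _ _; apply: ker. Qed.

Lemma survivors_step s :
  s < t -> minimal_empty (trunc N Sv a s.+1) (Sv s) (Sv s.+1) /\ 4 <= #|Sv s.+1|.
Proof. by move=> lt_st; case: run => _ _ step _; apply: step. Qed.

Lemma survivors_sub s s' : s <= s' -> s' <= t -> Sv s' \subset Sv s.
Proof.
elim: s' => [|s' IH]; first by rewrite leqn0 => /eqP->.
rewrite leq_eqVlt ltnS => /orP[/eqP-> // | le_ss'] lt_s't.
apply: subset_trans (IH le_ss' (ltnW lt_s't)).
by have [[]] := survivors_step lt_s't.
Qed.

Lemma four_le_card_survivors s : s <= t -> 4 <= #|Sv s|.
Proof.
case: s => [|s] le_st; first by rewrite survivors0 cardsT card_ord.
by have [] := survivors_step le_st.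
Qed.

Lemma exists_other_survivor s x : s <= t -> exists2 r, r \in Sv s & r != x.
Proof.
by move=> le_st; apply: exists_neq; apply: leq_trans (four_le_card_survivors le_st).
Qed.

Lemma bigcap_trunc s : s <= t -> \bigcap_(r in Sv s) trunc N Sv a s r = set0.
Proof.
case: s => [|s] le_st; last by have [[]] := survivors_step le_st.
rewrite survivors0 -bigcap_N; apply: eq_big => [r | r _]; first by rewrite inE.
by rewrite /trunc big_geq // setD0.
Qed.

Lemma kernel_mem s x r :
  s <= t -> x \in Sv s -> r \in Sv s -> r != x -> a s x \in N r.
Proof. by move=> le_st xS rS rx; have /setDP[] := kernel_in_trunc le_st xS rS rx. Qed.

Lemma kernel_notin_own s x : s <= t -> x \in Sv s -> a s x \notin N x.
Proof.
move=> le_st xS; have [r rS rx] := exists_other_survivor x le_st.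
have /setDP[_ notU] := kernel_in_trunc le_st xS rS rx.
apply/negP => axN; have : a s x \in \bigcap_(r in Sv s) trunc N Sv a s r.
  apply/bigcapP => r' r'S; case: (eqVneq r' x) => [-> | r'x].
    by apply/setDP.
  exact: kernel_in_trunc.
by rewrite bigcap_trunc // inE.
Qed.

(* a s' y lies in a truncation at stage s', hence outside all earlier kernels. *)
Lemma kernel_neq_later s s' x y :
  s < s' -> s' <= t -> x \in Sv s -> y \in Sv s' -> a s x != a s' y.
Proof.
move=> lt_ss' le_s't xS yS; have [r rS ry] := exists_other_survivor y le_s't.
have /setDP[_] := kernel_in_trunc le_s't yS rS ry.
apply: contra => /eqP <-.
rewrite (big_rem s) ?mem_index_iota // in_setU.
by rewrite imset_f.
Qed.

Definition kernel_vertices (j : nat) (x : 'I_l) : {set T} :=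
  [set a s x | s : 'I_j.+1].

Section Stage.

Variable j : nat.
Hypothesis le_jt : j <= t.

Lemma survivor_before s x : s <= j -> x \in Sv j -> x \in Sv s.
Proof. by move=> le_sj; apply/subsetP/survivors_sub. Qed.

Lemma card_kernel_vertices x : x \in Sv j -> #|kernel_vertices j x| = j.+1.
Proof.
move=> xS; rewrite card_imset ?card_ord // => s1 s2 eq_a; apply: val_inj.
wlog lt12 : s1 s2 eq_a / s1 < s2.
  move=> sym; case: (ltngtP s1 s2) => [lt12 | lt21 |] //; first exact: sym.
  exact/esym/(sym s2 s1 (esym eq_a)).
have := kernel_neq_later lt12 (leq_trans (leq_ord s2) le_jt)
  (survivor_before (leq_ord s1) xS) (survivor_before (leq_ord s2) xS).
by rewrite eq_a eqxx.
Qed.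

Lemma kernel_vertices_sub x r :
  x \in Sv j -> r \in Sv j -> r != x -> kernel_vertices j x \subset N r.
Proof.
move=> xS rS rx; apply/subsetP => _ /imsetP[s _ ->].
apply: kernel_mem rx; first exact: leq_trans (leq_ord s) le_jt.
  exact: survivor_before (leq_ord s) xS.
exact: survivor_before (leq_ord s) rS.
Qed.

Lemma kernel_vertices_notin x v :
  x \in Sv j -> v \in kernel_vertices j x -> v \notin N x.
Proof.
move=> xS /imsetP[s _ ->]; apply: kernel_notin_own.
  exact: leq_trans (leq_ord s) le_jt.
exact: survivor_before (leq_ord s) xS.
Qed.

Lemma kernel_vertices_subV x : x \in Sv j -> kernel_vertices j x \subset Vset N.
Proof.
move=> xS; have [r rS rx] := exists_other_survivor x le_jt.
apply: subset_trans (kernel_vertices_sub xS rS rx) _.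
by apply/subsetP => v vN; apply/bigcupP; exists r.
Qed.

(* The kernel vertices of another survivor r, together with a_r'^(j) for a
   third survivor r', give j + 2 distinct vertices of N_i. *)
Lemma card_survivor_ge i : i \in Sv j -> j.+2 <= #|N i|.
Proof.
move=> iS; have [r rS ri] := exists_other_survivor i le_jt.
have two_le : 1 < #|Sv j :\ i|.
  move: (four_le_card_survivors le_jt).
  by rewrite (cardsD1 i) iS add1n ltnS; apply: leq_trans.
have [r' /setD1P[r'i r'S] r'r] := exists_neq r two_le.
have [ir ir' rr'] : [/\ i != r, i != r' & r != r'] by split; rewrite eq_sym.
have notB : a j r' \notin kernel_vertices j r.
  apply/imsetP => -[s _ eq_a].
  move: (leq_ord s); rewrite leq_eqVlt => /orP[/eqP es | lt_sj].
    move: (kernel_mem le_jt r'S rS rr').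
    by rewrite eq_a es (negbTE (kernel_notin_own le_jt rS)).
  have := kernel_neq_later lt_sj le_jt (survivor_before (ltnW lt_sj) rS) r'S.
  by rewrite eq_a eqxx.
have sub : a j r' |: kernel_vertices j r \subset N i.
  by rewrite subUset sub1set kernel_mem // kernel_vertices_sub.
by move: (subset_leq_card sub); rewrite cardsU1 notB card_kernel_vertices.
Qed.

Lemma exists_three_set k i (Y : {set T}) :
  prop_ii N k -> #|N i| = k -> i \in Sv j -> Y \subset N i -> #|Y| <= j ->
  exists C : {set T}, [/\ #|C| = 3,
    C \subset (N i :|: kernel_vertices j i) :\: Y &
    forall r, C :&: (Vset N :\: N r) != set0].
Proof.
move=> prop2 card_Ni iS YN card_Y.
set S := (N i :|: kernel_vertices j i) :\: Y.
have eS : S = (N i :\: Y) :|: kernel_vertices j i.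
  apply/setP => v; rewrite !inE; case vK: (v \in kernel_vertices j i); last by rewrite !orbF.
  rewrite !orbT andbT; exact: contra (subsetP YN v) (kernel_vertices_notin iS vK).
have disjK : (N i :\: Y) :&: kernel_vertices j i = set0.
  apply/setP => v; rewrite !inE; case vK: (v \in kernel_vertices j i); last by rewrite andbF.
  by rewrite (negbTE (kernel_vertices_notin iS vK)) andbF.
have SV : S \subset Vset N.
  rewrite eS subUset kernel_vertices_subV // andbT.
  by apply/subsetP => v /setDP[vN _]; apply/bigcupP; exists i.
have le_Yk : #|Y| <= k by rewrite -card_Ni subset_leq_card.
have card_S : k.+1 <= #|S|.
  rewrite eS cardsU disjK cards0 subn0 cardsD (setIidPr YN) card_Ni.
  by rewrite card_kernel_vertices //; lia.
have [C [CS card_C notN]] := prop2 S SV card_S.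
exists C; split=> // r; case/subsetPn: (notN r) => v vC vNr.
by apply/set0Pn; exists v; rewrite !inE vC vNr (subsetP SV) ?(subsetP CS).
Qed.

Lemma three_set_escapes i (Y C : {set T}) r :
  i \in Sv j -> C \subset (N i :|: kernel_vertices j i) :\: Y ->
  ~~ (C \subset N r) -> r \in Sv j -> r != i -> ~~ (C :&: (N i :\: Y) \subset N r).
Proof.
move=> iS CS /subsetPn[v vC vNr] rS ri; apply/subsetPn; exists v => //.
move: (subsetP CS v vC); rewrite !inE vC => /andP[-> /orP[-> // | vK]].
by move: vNr; rewrite (subsetP (kernel_vertices_sub iS rS ri)).
Qed.

End Stage.

End DecompositionRun.

Theorem lemma5 (T : finType) (k l : nat) (N : 'I_l -> {set T})
  (t : nat) (Sv : nat -> {set 'I_l}) (a : nat -> 'I_l -> T) :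
  3 <= k -> 4 <= l ->
  (forall i, #|N i| = k) ->
  prop_i N -> prop_ii N k ->
  decomposition_run N t Sv a ->
  forall (j : nat) (i : 'I_l) (Y : {set T}),
    j <= t -> i \in Sv j -> Y \subset N i -> #|Y| <= j ->
    exists p : {set T},
      [/\ private_pair N Sv j i p, p \subset N i :\: Y &
        (exists C : {set T},
            [/\ #|C| = 3, p \subset C,
                C \subset (N i :|: [set a s i | s : 'I_j.+1]) :\: Y &
                forall r : 'I_l, C :&: (Vset N :\: N r) != set0])
        \/ (exists2 v, v \in p & private_vertex N Sv j i v)].
Proof.
move=> _ four_le_l card_N [bigcap_N _] prop2 run j i Y le_jt iS YN card_Y.
have [C [card_C CS meets]] :=
  exists_three_set four_le_l bigcap_N run le_jt prop2 (card_N i) iS YN card_Y.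
have notN r : ~~ (C \subset N r).
  by case/set0Pn: (meets r) => v /setIP[vC /setDP[_ vNr]]; apply/subsetPn; exists v.
set D := C :&: (N i :\: Y).
have DP : D \subset N i :\: Y by apply: subsetIr.
have DN : D \subset N i by apply: subset_trans DP (subsetDl _ _).
have D_escapes r : r \in Sv j -> r != i -> ~~ (D \subset N r).
  by move=> rS ri; apply: (three_set_escapes run le_jt iS CS (notN r) rS ri).
have D_pos : 0 < #|D|.
  have [r rS ri] := exists_other_survivor four_le_l run i le_jt.
  by case/subsetPn: (D_escapes r rS ri) => v vD _; apply/card_gt0P; exists v.
have D_lt3 : #|D| < 3.
  rewrite -card_C proper_card // properEneq subsetIl andbT.
  by apply: contraNneq (notN i) => <-.
have [card_D2 | /cards1P[v eD]] : #|D| = 2 \/ #|D| == 1 by lia.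
  exists D; split=> //; last by left; exists C; split=> //; apply: subsetIl.
have vP : v \in N i :\: Y by apply: (subsetP DP); rewrite eD set11.
have v_priv : private_vertex N Sv j i v.
  split; first by apply: (subsetP DN); rewrite eD set11.
  by move=> r rS ri; move: (D_escapes r rS ri); rewrite eD sub1set.
have card_P : 1 < #|N i :\: Y|.
  have := card_survivor_ge four_le_l bigcap_N run le_jt iS.
  by rewrite cardsD (setIidPr YN) card_N; lia.
have [w wP wv] := exists_neq v card_P.
exists [set v; w]; split.
- by apply: private_pair_with_private_vertex => //; case/setDP: wP.
- by rewrite subUset !sub1set vP wP.
- by right; exists v; first exact: set21.
Qed.
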